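(* Let $n\geq 3$, $k\in\mathbb{Z}_n$ with $k\neq 0$ and $2k\not\equiv 0\pmod n$, and let $C$ be a total perfect code in $\mathrm{GP}(n,k)$. If $E(C)\cap E(U)\neq\emptyset$, then $E(C)\cap E(U,V)=\emptyset$.
   Context: For an integer $n\geq 3$ and a nonzero $k\in\mathbb{Z}_n$, the generalized Petersen graph $\mathrm{GP}(n,k)$ is the simple graph with vertex set $\{u_i,v_i\mid i\in\mathbb{Z}_n\}$ and edges $u_iu_{i+1}$, $u_iv_i$, $v_iv_{i+k}$ for all $i\in\mathbb{Z}_n$ (indices modulo $n$). Let $U=\{u_i\mid i\in\mathbb{Z}_n\}$ and $V=\{v_i\mid i\in\mathbb{Z}_n\}$. For vertex subsets $A,B$, $E(A,B)$ is the set of edges with one end in $A$ and the other in $B$, and $E(A)=E(A,A)$. A total perfect code in a graph $\Gamma$ is a set $C\subseteq V(\Gamma)$ such that every vertex of $\Gamma$ is adjacent to exactly one vertex of $C$. *)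

From mathcomp Require Import all_boot.
Set Implicit Arguments. Unset Strict Implicit. Unset Printing Implicit Defensive.

(* Vertices of GP(n,k): (false, i) = u_i (outer vertex), (true, i) = v_i (inner vertex),
   with i : 'I_n; indices are taken modulo n. *)
Definition gp_vertex (n : nat) := (bool * 'I_n)%type.

Definition addmod (n : nat) (i : 'I_n) (m : nat) : nat := (i + m) %% n.

(* adjacency of GP(n,k); k is given by a natural number (its residue mod n) *)
Definition gp_adj (n k : nat) (x y : gp_vertex n) : bool :=
  match x, y with
  | (false, i), (false, j) => (val j == addmod i 1) || (val i == addmod j 1)
  | (false, i), (true, j) => i == j
  | (true, i), (false, j) => i == j
  | (true, i), (true, j) => (val j == addmod i k) || (val i == addmod j k)
  end.

Definition total_perfect_code (n k : nat) (C : {set gp_vertex n}) : Prop :=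
  forall x : gp_vertex n, #|[set y in C | gp_adj k x y]| = 1.

Definition has_outer_edge_in (n : nat) (C : {set gp_vertex n}) : Prop :=
  exists i j : 'I_n, val j = addmod i 1 /\ (false, i) \in C /\ (false, j) \in C.

Definition no_spoke_in (n : nat) (C : {set gp_vertex n}) : Prop :=
  forall i : 'I_n, ~ ((false, i) \in C /\ (true, i) \in C).

From mathcomp Require Import all_boot all_algebra.
From mathcomp Require Import zify.
Import GRing.Theory.
Local Open Scope ring_scope.
Set Implicit Arguments. Unset Strict Implicit. Unset Printing Implicit Defensive.

(* Write x and y for the indicator functions of C on the outer and inner rims.
   Perfectness amounts to the balance laws x(i-1) + x(i+1) + y(i) = 1 and
   y(i-k) + y(i+k) + x(i) = 1, which already force, over any abelian group:
   v_(i-1) and v_(i+1) are never both in C (otherwise u_(i-1+-k), u_(i+1+-k) are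
   excluded, so v_(i+k) and v_(i-k) are both in C and v_i sees two code
   vertices), and one of v_(i-1), u_i, v_(i+1) is in C.  Hence a spoke u_i v_i
   in C excludes u_(i+1), u_(i+2) and forces the spoke u_(i+3) v_(i+3) into C,
   so along the outer rim x(i+t) = [3 | t], leaving no room for an outer edge
   in C. *)

Section OuterInnerBalance.

Variables (V : zmodType) (e : V) (x y : V -> nat).
Hypothesis outer_balanced : forall p : V, (x (p - e) + x (p + e) + y p = 1)%N.

Definition inner_balanced (K : V) : Prop := forall p : V, (y (p - K) + y (p + K) + x p = 1)%N.

Lemma inner_balancedN K : inner_balanced K -> inner_balanced (- K).
Proof. by move=> hK p; rewrite opprK; have := hK p; lia. Qed.

Lemma inner_flanked K (hK : inner_balanced K) (p : V) :
  y (p - e) = 1%N -> y (p + e) = 1%N -> y (p + K) = 1%N.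
Proof.
move=> ylo yhi.
have xlo : x (p + K - e) = 0%N.
  by have := hK (p + K - e); rewrite [p + K - e - K]addrAC addrK ylo; lia.
have xhi : x (p + K + e) = 0%N.
  by have := hK (p + K + e); rewrite [p + K + e - K]addrAC addrK yhi; lia.
by have := outer_balanced (p + K); rewrite xlo xhi.
Qed.

Lemma no_inner_flanks K (hK : inner_balanced K) (p : V) :
  y (p - e) = 1%N -> y (p + e) = 1%N -> False.
Proof.
move=> ylo yhi; have := hK p.
by rewrite (inner_flanked hK ylo yhi) (inner_flanked (inner_balancedN hK) ylo yhi).
Qed.

Lemma inner_offset_flanked K (hK : inner_balanced K) (w : V) :
  y (w + K) = 1%N -> y (w - e) = 0%N -> y (w + e) = 0%N -> False.
Proof.
move=> yK ylo yhi.
have xlo : x (w + K - e) = 0%N by have := outer_balanced (w + K); rewrite yK; lia.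
have xhi : x (w + K + e) = 0%N by have := outer_balanced (w + K); rewrite yK; lia.
have ylo2 : y (w + K - e + K) = 1%N.
  by have := hK (w + K - e); rewrite [w + K - e - K]addrAC addrK ylo xlo; lia.
have yhi2 : y (w + K + e + K) = 1%N.
  by have := hK (w + K + e); rewrite [w + K + e - K]addrAC addrK yhi xhi; lia.
apply: (no_inner_flanks hK (p := w + K + K)).
  by rewrite [w + K + K - e]addrAC.
by rewrite [w + K + K + e]addrAC.
Qed.

Lemma outer_or_inner_flank K (hK : inner_balanced K) (w : V) :
  (0 < y (w - e) + x w + y (w + e))%N.
Proof.
rewrite lt0n !addn_eq0; apply/negP=> /andP[/andP[/eqP ylo /eqP xw] /eqP yhi].
have := hK w; rewrite xw addn0 => hw.
have [yK | yK] : y (w + K) = 1%N \/ y (w - K) = 1%N by lia.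
- by have := inner_offset_flanked hK yK ylo yhi.
- by have := inner_offset_flanked (inner_balancedN hK) yK ylo yhi.
Qed.

Lemma spoke_shift3 K (hK : inner_balanced K) (z : V) : x z = 1%N -> y z = 1%N ->
  [/\ x (z + e) = 0, x (z + e *+ 2) = 0, x (z + e *+ 3) = 1 & y (z + e *+ 3) = 1]%N.
Proof.
move=> xz yz.
have -> : z + e *+ 2 = z + e + e by rewrite mulr2n addrA.
have -> : z + e *+ 3 = z + e + e + e by rewrite mulrS mulr2n !addrA.
have x1 : x (z + e) = 0%N by have := outer_balanced z; rewrite yz; lia.
have [x2 y1] : x (z + e + e) = 0%N /\ y (z + e) = 0%N.
  by have := outer_balanced (z + e); rewrite addrK xz; lia.
have y2 : y (z + e + e) = 0%N.
  have [// | y2] : y (z + e + e) = 0%N \/ y (z + e + e) = 1%N.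
    by have := outer_balanced (z + e + e); lia.
  by case: (no_inner_flanks hK (p := z + e)); rewrite ?addrK.
have x3 : x (z + e + e + e) = 1%N.
  by have := outer_balanced (z + e + e); rewrite addrK x1 y2; lia.
split=> //.
have := outer_or_inner_flank hK (z + e + e); rewrite addrK y1 x2.
by have := outer_balanced (z + e + e + e); lia.
Qed.

Lemma outer_period3 K (hK : inner_balanced K) (z : V) : x z = 1%N -> y z = 1%N ->
  forall t, x (z + e *+ t) = (3 %| t)%N.
Proof.
move=> xz yz.
have spokes m : x (z + e *+ (3 * m)) = 1%N /\ y (z + e *+ (3 * m)) = 1%N.
  elim: m => [|m [xm ym]]; first by rewrite muln0 mulr0n addr0.
  have [_ _ x3 y3] := spoke_shift3 hK xm ym.
  by rewrite mulnSr mulrnDr addrA.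
move=> t; rewrite /dvdn {1}(divn_eq t 3) mulnC mulrnDr addrA.
have [xm ym] := spokes (t %/ 3)%N; have [x1 x2 _ _] := spoke_shift3 hK xm ym.
have : (t %% 3 < 3)%N by rewrite ltn_mod.
by case: (t %% 3)%N => [|[|[|r]]] //= _; rewrite ?addr0 ?mulr1n.
Qed.

End OuterInnerBalance.

Definition outer_in n (C : {set gp_vertex n}) (i : 'I_n) : nat := (false, i) \in C.
Definition inner_in n (C : {set gp_vertex n}) (i : 'I_n) : nat := (true, i) \in C.

Lemma addmodE n (i : 'I_n.+2) m : addmod i m = val (i + m%:R).
Proof. by rewrite /addmod Zp_nat /= modnDmr. Qed.

Lemma cycle_adjE n (i j : 'I_n.+2) m :
  (val j == addmod i m) || (val i == addmod j m) = (j \in [:: i - m%:R; i + m%:R]).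
Proof.
rewrite !addmodE !val_eqE !inE orbC; congr (_ || _).
by rewrite [RHS]eq_sym subr_eq.
Qed.

Lemma Zp_subr_neq_addr n (i : 'I_n.+2) m :
  ((2 * m) %% n.+2 != 0)%N -> i - m%:R != i + m%:R.
Proof.
apply: contra => /eqP/addrI/eqP; rewrite eq_sym -addr_eq0 -natrD -val_eqE /=.
by rewrite Zp_nat /= addnn -mul2n.
Qed.

Lemma card_set_mem_uniq (T : finType) (A : {set T}) (s : seq T) :
  uniq s -> #|[set y in A | y \in s]| = count (mem A) s.
Proof.
move=> us; rewrite -size_filter -(card_uniqP (filter_uniq _ us)).
by apply: eq_card => y; rewrite !inE mem_filter andbC.
Qed.

Section PerfectCodeBalance.

Variables (n k : nat) (C : {set gp_vertex n.+3}).
Hypothesis C_code : total_perfect_code k C.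

Lemma code_outer_balanced (i : 'I_n.+3) :
  (outer_in C (i - 1)%R + outer_in C (i + 1)%R + inner_in C i = 1)%N.
Proof.
rewrite -(C_code (false, i)).
have -> : [set v in C | gp_adj k (false, i) v] =
          [set v in C | v \in [:: (false, i - 1); (false, i + 1); (true, i)]].
  apply/setP => -[[] j]; rewrite !inE /= !xpair_eqE /= ?orbF.
    by rewrite eq_sym.
  by rewrite cycle_adjE mulr1n !inE.
rewrite card_set_mem_uniq /= ?addn0 ?addnA // !inE !xpair_eqE /= andbT orbF.
by apply: (@Zp_subr_neq_addr _ _ 1); rewrite modn_small.
Qed.

Hypothesis k2_neq0 : ((2 * k) %% n.+3 != 0)%N.

Lemma code_inner_balanced : inner_balanced (outer_in C) (inner_in C) k%:R.
Proof.
move=> i; rewrite -(C_code (true, i)).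
have -> : [set v in C | gp_adj k (true, i) v] =
          [set v in C | v \in [:: (true, i - k%:R); (true, i + k%:R); (false, i)]].
  apply/setP => -[[] j]; rewrite !inE /= !xpair_eqE /= ?orbF.
    by rewrite cycle_adjE !inE.
  by rewrite eq_sym.
rewrite card_set_mem_uniq /= ?addn0 ?addnA // !inE !xpair_eqE /= andbT orbF.
exact: Zp_subr_neq_addr.
Qed.

End PerfectCodeBalance.

Local Close Scope ring_scope.

Theorem lemma4p3 (n k : nat) (C : {set gp_vertex n}) :
  3 <= n -> k %% n != 0 -> (2 * k) %% n != 0 ->
  total_perfect_code k C ->
  has_outer_edge_in C ->
  no_spoke_in C.
Proof.
move=> n_ge3; case: n n_ge3 C => [|[|[|n]]] // _ C _ k2 C_code.
(* k %% n != 0 is implied by (2 * k) %% n != 0. *)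
move=> [i [i' [ii' [ui ui']]]] j [uj vj].
have {}ii' : i' = (i + 1)%R by apply/val_inj; rewrite ii' addmodE.
subst i'.
have period t : outer_in C (j + 1 *+ t)%R = (3 %| t).
  apply: (outer_period3 (code_outer_balanced C_code) (code_inner_balanced C_code k2)).
    by rewrite /outer_in uj.
  by rewrite /inner_in vj.
have ij : (j + 1 *+ val (i - j))%R = i by rewrite natr_Zp addrC subrK.
have := period (val (i - j)%R); have := period (val (i - j)%R).+1.
rewrite mulrSr addrA ij /outer_in ui ui'.
lia.
Qed.
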